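(* Let $(\mathbb{X},\dagger)$ be a Moore-Penrose dagger additive category and let $\begin{bmatrix}\alpha&\beta\\ \beta^\dagger&\delta\end{bmatrix}:B\oplus C\to B\oplus C$ be a $\dagger$-positive map. Then for any map $\begin{bmatrix}\phi&\psi\end{bmatrix}:B\oplus C\to D$ such that $\begin{bmatrix}\alpha&\beta\\ \beta^\dagger&\delta\end{bmatrix}=\begin{bmatrix}\phi&\psi\end{bmatrix}^\dagger\circ\begin{bmatrix}\phi&\psi\end{bmatrix}$, we have $\beta^\dagger\circ\alpha^\circ=\psi^\dagger\circ(\phi^\circ)^\dagger$.
   Context: A dagger additive category is a dagger category (contravariant identity-on-objects involutive functor $\dagger$) whose hom-sets are abelian groups with bilinear composition and additive $\dagger$, having a zero object and finite biproducts whose projections $\pi_j$ and injections $\iota_j$ satisfy $\pi_j^\dagger=\iota_j$. Maps between biproducts are written as matrices; composition is matrix multiplication and $\dagger$ is transpose with entrywise $\dagger$. An endomorphism $p$ is $\dagger$-positive if $p=\chi^\dagger\circ\chi$ for some map $\chi$. A Moore-Penrose inverse of $f:A\to B$ is a map $f^\circ:B\to A$ with $f f^\circ f=f$, $f^\circ f f^\circ=f^\circ$, $(f f^\circ)^\dagger=f f^\circ$, $(f^\circ f)^\dagger=f^\circ f$ (unique when it exists); a Moore-Penrose dagger additive category is one in which every map has a Moore-Penrose inverse. Here $\alpha:B\to B$, $\beta:C\to B$, $\delta:C\to C$, $\phi:B\to D$, $\psi:C\to D$. *)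

From HB Require Import structures.
From mathcomp Require Import all_boot all_order all_algebra.
Set Implicit Arguments. Unset Strict Implicit. Unset Printing Implicit Defensive.
Import GRing.Theory.
Local Open Scope ring_scope.

Record DagAddCat := {
  Ob : Type;
  Mor : Ob -> Ob -> zmodType;
  idm : forall A, Mor A A;
  mcomp : forall A B C, Mor B C -> Mor A B -> Mor A C;
  dag : forall A B, Mor A B -> Mor B A;
  compA : forall A B C D (f : Mor C D) (g : Mor B C) (h : Mor A B),
      mcomp f (mcomp g h) = mcomp (mcomp f g) h;
  comp1m : forall A B (f : Mor A B), mcomp (idm B) f = f;
  compm1 : forall A B (f : Mor A B), mcomp f (idm A) = f;
  compDl : forall A B C (f g : Mor B C) (h : Mor A B),
      mcomp (f + g) h = mcomp f h + mcomp g h;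
  compDr : forall A B C (f : Mor B C) (g h : Mor A B),
      mcomp f (g + h) = mcomp f g + mcomp f h;
  dag_comp : forall A B C (f : Mor B C) (g : Mor A B),
      dag (mcomp f g) = mcomp (dag g) (dag f);
  dag_id : forall A, dag (idm A) = idm A;
  dagK : forall A B (f : Mor A B), dag (dag f) = f;
  dagD : forall A B (f g : Mor A B), dag (f + g) = dag f + dag g;
  zob : Ob;
  zob_id : idm zob = 0;  (* in an additive category: zob is a zero object *)
  bip : Ob -> Ob -> Ob;
  pr1 : forall A B, Mor (bip A B) A;
  pr2 : forall A B, Mor (bip A B) B;
  in1 : forall A B, Mor A (bip A B);
  in2 : forall A B, Mor B (bip A B);
  pr1in1 : forall A B, mcomp (pr1 A B) (in1 A B) = idm A;
  pr2in2 : forall A B, mcomp (pr2 A B) (in2 A B) = idm B;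
  pr1in2 : forall A B, mcomp (pr1 A B) (in2 A B) = 0;
  pr2in1 : forall A B, mcomp (pr2 A B) (in1 A B) = 0;
  bip_id : forall A B,
      mcomp (in1 A B) (pr1 A B) + mcomp (in2 A B) (pr2 A B) = idm (bip A B);
  dag_pr1 : forall A B, dag (pr1 A B) = in1 A B;
  dag_pr2 : forall A B, dag (pr2 A B) = in2 A B
}.

Arguments Ob d : clear implicits.
Arguments Mor d A B : clear implicits.
Arguments idm {d} A.
Arguments mcomp {d A B C}.
Arguments dag {d A B}.
Arguments bip {d}.
Arguments pr1 {d} A B.
Arguments pr2 {d} A B.
Arguments in1 {d} A B.
Arguments in2 {d} A B.

Section Defs.
Variable X : DagAddCat.

Definition rowmap (A B D : Ob X) (f : Mor X A D) (g : Mor X B D)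
  : Mor X (bip A B) D := mcomp f (pr1 A B) + mcomp g (pr2 A B).

(* 2x2 matrix [[a b];[c d]] : A (+) B -> C (+) D *)
Definition mat2 (A B C D : Ob X) (a : Mor X A C) (b : Mor X B C)
  (c : Mor X A D) (d : Mor X B D) : Mor X (bip A B) (bip C D) :=
  mcomp (in1 C D) (mcomp a (pr1 A B)) + mcomp (in1 C D) (mcomp b (pr2 A B))
  + mcomp (in2 C D) (mcomp c (pr1 A B)) + mcomp (in2 C D) (mcomp d (pr2 A B)).

Definition dag_positive (A : Ob X) (p : Mor X A A) : Prop :=
  exists (E : Ob X) (chi : Mor X A E), p = mcomp (dag chi) chi.

Definition is_MP_inverse (A B : Ob X) (f : Mor X A B) (g : Mor X B A) : Prop :=
  [/\ mcomp f (mcomp g f) = f,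
      mcomp g (mcomp f g) = g,
      dag (mcomp f g) = mcomp f g &
      dag (mcomp g f) = mcomp g f].

Definition MoorePenrose : Prop :=
  forall (A B : Ob X) (f : Mor X A B), exists g, is_MP_inverse f g.
End Defs.

From Pilot Require Import Defs.
From mathcomp Require Import all_boot all_order all_algebra.
Set Implicit Arguments. Unset Strict Implicit.
Unset Printing Implicit Defensive.
Import GRing.Theory.
Local Open Scope ring_scope.

(* The block identity forces alpha = phi^† phi and beta = phi^† psi.  The
   Moore-Penrose inverse of the Gram map phi^† phi is phi° phi°^†, and
   phi phi° phi°^† = phi°^†, so
     beta^† alpha° = psi^† phi phi° phi°^† = psi^† phi°^†. *)

Local Notation "f ⊚ g" := (mcomp f g) (at level 40, left associativity).

Section DaggerAdditive.
Variable X : DagAddCat.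

Lemma comp0m (A B C : Ob X) (h : Mor X A B) : (0 : Mor X B C) ⊚ h = 0.
Proof. by apply: (addrI (0 ⊚ h)); rewrite -Defs.compDl !addr0. Qed.

Lemma compm0 (A B C : Ob X) (h : Mor X B C) : h ⊚ (0 : Mor X A B) = 0.
Proof. by apply: (addrI (h ⊚ 0)); rewrite -Defs.compDr !addr0. Qed.

Lemma dag_in1 (A B : Ob X) : dag (in1 A B) = pr1 A B.
Proof. by rewrite -dag_pr1 Defs.dagK. Qed.

Lemma rowmap_in1 (A B D : Ob X) (f : Mor X A D) (g : Mor X B D) :
  rowmap f g ⊚ in1 A B = f.
Proof.
rewrite /rowmap Defs.compDl -!Defs.compA pr1in1 pr2in1 compm0 Defs.compm1.
by rewrite addr0.
Qed.

Lemma rowmap_in2 (A B D : Ob X) (f : Mor X A D) (g : Mor X B D) :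
  rowmap f g ⊚ in2 A B = g.
Proof.
rewrite /rowmap Defs.compDl -!Defs.compA pr1in2 pr2in2 compm0 Defs.compm1.
by rewrite add0r.
Qed.

Lemma mat2_in1 (A B C D : Ob X) a b c d :
  @mat2 X A B C D a b c d ⊚ in1 A B = in1 C D ⊚ a + in2 C D ⊚ c.
Proof.
rewrite /mat2 !Defs.compDl -!Defs.compA pr1in1 pr2in1 !compm0 !Defs.compm1.
by rewrite !addr0.
Qed.

Lemma mat2_in2 (A B C D : Ob X) a b c d :
  @mat2 X A B C D a b c d ⊚ in2 A B = in1 C D ⊚ b + in2 C D ⊚ d.
Proof.
rewrite /mat2 !Defs.compDl -!Defs.compA pr1in2 pr2in2 !compm0 !Defs.compm1.
by rewrite addr0 add0r.
Qed.

Lemma pr1_in1_in2 (A B E : Ob X) (x : Mor X E A) (y : Mor X E B) :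
  pr1 A B ⊚ (in1 A B ⊚ x + in2 A B ⊚ y) = x.
Proof.
by rewrite Defs.compDr !Defs.compA pr1in1 pr1in2 comp0m Defs.comp1m addr0.
Qed.

Lemma gram_entry (A D E1 E2 : Ob X) (h : Mor X A D) (i : Mor X E1 A)
    (j : Mor X E2 A) :
  dag i ⊚ (dag h ⊚ h) ⊚ j = dag (h ⊚ i) ⊚ (h ⊚ j).
Proof. by rewrite Defs.dag_comp !Defs.compA. Qed.

End DaggerAdditive.

Section MoorePenroseInverse.
Variables (X : DagAddCat) (A B : Ob X) (f : Mor X A B) (g : Mor X B A).
Hypothesis fgMP : is_MP_inverse f g.

Lemma MP_fgf : f ⊚ g ⊚ f = f.
Proof. by case: fgMP; rewrite -Defs.compA. Qed.

Lemma MP_gfg : g ⊚ f ⊚ g = g.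
Proof. by case: fgMP; rewrite -Defs.compA. Qed.

Lemma dag_MP_fg : dag (f ⊚ g) = f ⊚ g.
Proof. by case: fgMP. Qed.

Lemma dag_MP_gf : dag (g ⊚ f) = g ⊚ f.
Proof. by case: fgMP. Qed.

Lemma MP_fg_sym : dag g ⊚ dag f = f ⊚ g.
Proof. by rewrite -Defs.dag_comp dag_MP_fg. Qed.

Lemma MP_gf_sym : dag f ⊚ dag g = g ⊚ f.
Proof. by rewrite -Defs.dag_comp dag_MP_gf. Qed.

Lemma MP_dag_fgf : dag f ⊚ dag g ⊚ dag f = dag f.
Proof. by rewrite -Defs.compA -!Defs.dag_comp MP_fgf. Qed.

Lemma MP_dag_gfg : dag g ⊚ dag f ⊚ dag g = dag g.
Proof. by rewrite -Defs.compA -!Defs.dag_comp MP_gfg. Qed.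

Lemma MP_dag_f_fg : dag f ⊚ f ⊚ g = dag f.
Proof. by rewrite -Defs.compA -MP_fg_sym Defs.compA MP_dag_fgf. Qed.

Lemma MP_g_dag_gf : g ⊚ dag g ⊚ dag f = g.
Proof. by rewrite -Defs.compA MP_fg_sym Defs.compA MP_gfg. Qed.

Lemma MP_fg_dag_g : f ⊚ g ⊚ dag g = dag g.
Proof. by rewrite -MP_fg_sym MP_dag_gfg. Qed.

End MoorePenroseInverse.

Section MoorePenroseTheory.
Variable X : DagAddCat.

Lemma MP_inverse_uniq (A B : Ob X) (f : Mor X A B) (g h : Mor X B A) :
  is_MP_inverse f g -> is_MP_inverse f h -> g = h.
Proof.
move=> fg fh; have cA := @Defs.compA X.
have fgE : f ⊚ g = f ⊚ h.
  transitivity (dag (f ⊚ h ⊚ (f ⊚ g))).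
    by rewrite cA (MP_fgf fh) (dag_MP_fg fg).
  by rewrite Defs.dag_comp (dag_MP_fg fg) (dag_MP_fg fh) cA (MP_fgf fg).
have gfE : g ⊚ f = h ⊚ f.
  transitivity (dag (g ⊚ f ⊚ (h ⊚ f))).
    by rewrite -(cA _ _ _ _ g) (cA _ _ _ _ f) (MP_fgf fh) (dag_MP_gf fg).
  rewrite Defs.dag_comp (dag_MP_gf fg) (dag_MP_gf fh).
  by rewrite -(cA _ _ _ _ h) (cA _ _ _ _ f) (MP_fgf fg).
by rewrite -(MP_gfg fg) -cA fgE cA gfE (MP_gfg fh).
Qed.

Lemma MP_inverse_gram (A B : Ob X) (f : Mor X A B) (g : Mor X B A) :
  is_MP_inverse f g -> is_MP_inverse (dag f ⊚ f) (g ⊚ dag g).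
Proof.
move=> fg; have cA := @Defs.compA X.
have left_gram : dag f ⊚ f ⊚ (g ⊚ dag g) = g ⊚ f.
  by rewrite !cA (MP_dag_f_fg fg) (MP_gf_sym fg).
have right_gram : g ⊚ dag g ⊚ (dag f ⊚ f) = g ⊚ f.
  by rewrite cA (MP_g_dag_gf fg).
have gf_sym : dag (g ⊚ f) = g ⊚ f by rewrite Defs.dag_comp (MP_gf_sym fg).
split; rewrite ?left_gram ?right_gram //.
- by rewrite cA (MP_dag_f_fg fg).
- by rewrite -(MP_gf_sym fg) cA (MP_g_dag_gf fg).
Qed.

End MoorePenroseTheory.

Theorem mainTheorem14 (X : DagAddCat) (HMP : MoorePenrose X)
  (B C D : Ob X) (alpha : Mor X B B) (beta : Mor X C B) (delta : Mor X C C)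
  (phi : Mor X B D) (psi : Mor X C D)
  (Hpos : dag_positive (mat2 alpha beta (dag beta) delta))
  (Hfac : mat2 alpha beta (dag beta) delta
          = mcomp (dag (rowmap phi psi)) (rowmap phi psi))
  (alpha_o : Mor X B B) (phi_o : Mor X D B)
  (Halpha : is_MP_inverse alpha alpha_o)
  (Hphi : is_MP_inverse phi phi_o) :
  mcomp (dag beta) alpha_o = mcomp (dag psi) (dag phi_o).
Proof.
have entry (E : Ob X) (i : Mor X E (bip B C)) :
    dag (in1 B C) ⊚ mat2 alpha beta (dag beta) delta ⊚ i
  = dag (rowmap phi psi ⊚ in1 B C) ⊚ (rowmap phi psi ⊚ i).
  by rewrite Hfac gram_entry.
have alphaE : alpha = dag phi ⊚ phi.
  by move: (entry _ (in1 B C)); rewrite -Defs.compA mat2_in1 dag_in1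
    pr1_in1_in2 rowmap_in1.
have betaE : beta = dag phi ⊚ psi.
  by move: (entry _ (in2 B C)); rewrite -Defs.compA mat2_in2 dag_in1
    pr1_in1_in2 rowmap_in1 rowmap_in2.
have alpha_oE : alpha_o = phi_o ⊚ dag phi_o.
  by apply: MP_inverse_uniq Halpha _; rewrite alphaE; apply: MP_inverse_gram.
rewrite betaE alpha_oE Defs.dag_comp Defs.dagK -Defs.compA.
by rewrite (@Defs.compA X _ _ _ _ phi) (MP_fg_dag_g Hphi).
Qed.
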